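(* Let $S$ be a characteristic subset of $\mathbb{R}_{\ge0}$, let $X$ be an $\mathbb{R}_{\ge0}$-ultrametrizable topological space, and let $A$ be a closed subset of $X$. Then there exists a map $\Upsilon\colon\mathrm{Ult}(A;S)\to\mathrm{Ult}(X;S)$ such that: (B1) $\Upsilon$ is an isometric embedding: $\mathcal{UD}_X^S(\Upsilon(d_1),\Upsilon(d_2))=\mathcal{UD}_A^S(d_1,d_2)$ for all $d_1,d_2\in\mathrm{Ult}(A;S)$; (B2) $\Upsilon(d)|_{A\times A}=d$ for all $d\in\mathrm{Ult}(A;S)$; (B3) if $d_1,d_2\in\mathrm{Ult}(A;S)$ satisfy $d_1(a,b)\le d_2(a,b)$ for all $a,b\in A$, then $\Upsilon(d_1)(x,y)\le\Upsilon(d_2)(x,y)$ for all $x,y\in X$; (B4) $\Upsilon(d\lor e)=\Upsilon(d)\lor\Upsilon(e)$ for all $d,e\in\mathrm{Ult}(A;S)$. Moreover, if $X$ is completely metrizable, then $\Upsilon$ can be chosen to satisfy (B1)–(B4) and also (B5) if $d\in\mathrm{Ult}(A;S)$ is complete, then so is $\Upsilon(d)$.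
   Context: A subset $S\subseteq\mathbb{R}_{\ge0}$ is characteristic if $0\in S$ and for every $s>0$ there is $t\in S\setminus\{0\}$ with $t\le s$. For $S\subseteq\mathbb{R}_{\ge 0}$ with $0\in S$, an $S$-ultrametric on a set $Y$ is a map $d\colon Y\times Y\to S$ with $d(x,y)=0\iff x=y$, $d(x,y)=d(y,x)$ and $d(x,y)\le\max\{d(x,z),d(z,y)\}$. For a topological space $Y$, $\mathrm{Ult}(Y;S)$ is the set of $S$-ultrametrics on $Y$ generating the topology of $Y$ (via open balls); $Y$ is $\mathbb{R}_{\ge0}$-ultrametrizable if $\mathrm{Ult}(Y;\mathbb{R}_{\ge0})\ne\emptyset$. $(d\lor e)(x,y)=\max\{d(x,y),e(x,y)\}$. $\mathcal{UD}_Y^S(d,e)$ is the infimum of all $\epsilon\in S\sqcup\{\infty\}$ such that $d(x,y)\le\max\{e(x,y),\epsilon\}$ and $e(x,y)\le\max\{d(x,y),\epsilon\}$ for all $x,y\in Y$. A metric is complete if every Cauchy filter converges (equivalently, every Cauchy sequence converges). $A$ carries the subspace topology. *)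

From HB Require Import structures.
From mathcomp Require Import all_boot all_order all_algebra.
From mathcomp Require Import all_classical all_reals all_analysis.
Import Order.TTheory GRing.Theory Num.Theory.
Local Open Scope classical_set_scope.
Local Open Scope ring_scope.
Set Implicit Arguments. Unset Strict Implicit.

Definition characteristic (R : realType) (S : set R) : Prop :=
  [/\ S `<=` [set x | 0 <= x], S 0 &
      forall s : R, 0 < s -> exists t : R, [/\ S t, t != 0 & t <= s]].

Definition is_S_ultrametric (R : realType) (T : Type) (S : set R)
    (d : T -> T -> R) : Prop :=
  [/\ forall x y, S (d x y),
      forall x y, d x y = 0 <-> x = y,
      forall x y, d x y = d y x &
      forall x y z, d x y <= Num.max (d x z) (d z y)].

Definition generates_topology (R : realType) (T : Type) (op : set T -> Prop)
    (d : T -> T -> R) : Prop :=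
  forall U : set T,
    op U <-> (forall x, U x -> exists2 r : R, 0 < r & [set y | d x y < r] `<=` U).

Definition Ult (R : realType) (T : Type) (op : set T -> Prop) (S : set R) :
    set (T -> T -> R) :=
  [set d | is_S_ultrametric S d /\ generates_topology op d].

Definition subspace_open (X : topologicalType) (A : set X) :
    set {x : X | A x} -> Prop :=
  fun U => exists V : set X, open V /\ U = (@proj1_sig X A) @^-1` V.

Definition UD (R : realType) (T : Type) (S : set R) (d e : T -> T -> R) : \bar R :=
  ereal_inf ([set eps%:E | eps in [set eps : R | S eps /\
       (forall x y, d x y <= Num.max (e x y) eps /\ e x y <= Num.max (d x y) eps)]]
     `|` [set +oo%E]).

Definition is_metric (R : realType) (T : Type) (d : T -> T -> R) : Prop :=
  [/\ forall x y, 0 <= d x y,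
      forall x y, d x y = 0 <-> x = y,
      forall x y, d x y = d y x &
      forall x y z, d x y <= d x z + d z y].

Definition complete_metric (R : realType) (T : Type) (d : T -> T -> R) : Prop :=
  forall u : nat -> T,
    (forall eps : R, 0 < eps -> exists N : nat,
        forall m n, (N <= m)%N -> (N <= n)%N -> d (u m) (u n) < eps) ->
    exists l : T, forall eps : R, 0 < eps -> exists N : nat,
        forall n, (N <= n)%N -> d (u n) l < eps.

Definition completely_metrizable (R : realType) (X : topologicalType) : Prop :=
  exists d : X -> X -> R, [/\ is_metric d, generates_topology open d & complete_metric d].
Arguments subspace_open {X} A.

From HB Require Import structures.
From mathcomp Require Import all_boot all_order all_algebra.
From mathcomp Require Import all_classical all_reals all_analysis.
From mathcomp Require Import lra.
From Stdlib Require Import ClassicalEpsilon.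
Import Order.TTheory GRing.Theory Num.Theory.
Local Open Scope classical_set_scope.
Local Open Scope ring_scope.
Set Implicit Arguments. Unset Strict Implicit. Unset Printing Implicit Defensive.

(* Fix a compatible ultrametric w on X and write distA for the w-distance to
   the closed set A, so distA > 0 off A. For x outside A the balls
   B(x, distA x) partition the complement of A, and distA is constant on each
   of them. Choosing in A one point within 2 distA of each ball gives a
   retraction retr : X -> A that is constant on the balls, and
     Ups d x y = max (d (retr x) (retr y)) (gap_dist x y),
   where gap_dist x y is rho (w x y) inside a ball and
   max (rho (distA x)) (rho (distA y)) otherwise, rho being a monotone map
   into S with 0 < rho t <= t for t > 0. As retr is the identity on A and
   gap_dist vanishes on A x A, (B1)-(B4) are max-algebra; the closedness of A
   and the bound w x (retr x) <= 2 distA x make Ups d compatible with the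
   topology, and complete when w and d are. For (B5) w is first replaced by
   the complete compatible ultrametric max w v built from a complete metric m,
   where v x y = 1/(n+1) for the first n at which x and y lie in different
   cells of a partition of X into w-balls of m-diameter < 2/(n+1). *)

Lemma proj1_sig_inj (T : Type) (P : T -> Prop) : injective (@proj1_sig T P).
Proof. by move=> [a ?] [b ?] /= ab; apply: eq_exist. Qed.

Section Ultrametrics.
Variable R : realType.

Definition ultrametric (T : Type) (e : T -> T -> R) :=
  is_S_ultrametric [set r : R | 0 <= r] e.

Definition cauchy_wrt (T : Type) (e : T -> T -> R) (u : nat -> T) :=
  forall eps, 0 < eps -> exists N, forall m n, (N <= m)%N -> (N <= n)%N ->
    e (u m) (u n) < eps.

Definition cvg_wrt (T : Type) (e : T -> T -> R) (u : nat -> T) (l : T) :=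
  forall eps, 0 < eps -> exists N, forall n, (N <= n)%N -> e (u n) l < eps.

Lemma S_ultrametric_ultrametric (T : Type) (S : set R) (e : T -> T -> R) :
  S `<=` [set r | 0 <= r] -> is_S_ultrametric S e -> ultrametric e.
Proof. by move=> S_ge0 [eS ? ? ?]; split => // x y; apply: S_ge0. Qed.

Lemma S_max (S : set R) a b : S a -> S b -> S (Num.max a b).
Proof. by move=> Sa Sb; case: (leP a b). Qed.

Lemma max_eq0 (a b : R) : 0 <= a -> 0 <= b -> Num.max a b = 0 -> a = 0 /\ b = 0.
Proof. by move=> a0 b0; case: (leP a b) => h e; split; lra. Qed.

Lemma ltr_inv_truncn (t : R) : 0 < t -> ((Num.truncn t^-1).+1%:R)^-1 < t.
Proof.
move=> t0; have /andP[_ lt_t] : (Num.truncn t^-1)%:R <= t^-1 < (Num.truncn t^-1).+1%:R.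
  by apply: truncn_itv; rewrite invr_ge0 ltW.
by rewrite invf_plt ?posrE ?ltr0Sn.
Qed.

Section OneUltrametric.
Variables (T : Type) (e : T -> T -> R).
Hypothesis ue : ultrametric e.

Let ultraP : [/\ forall x y, 0 <= e x y, forall x y, e x y = 0 <-> x = y,
  forall x y, e x y = e y x & forall x y z, e x y <= Num.max (e x z) (e z y)].
Proof. exact: ue. Qed.

Lemma ultra_ge0 x y : 0 <= e x y. Proof. by case: ultraP. Qed.
Lemma ultra_eq0 x y : e x y = 0 <-> x = y. Proof. by case: ultraP. Qed.
Lemma ultra_xx x : e x x = 0. Proof. exact: (ultra_eq0 x x).2. Qed.
Lemma ultra_sym x y : e x y = e y x. Proof. by case: ultraP. Qed.
Lemma ultra_le_max x y z : e x y <= Num.max (e x z) (e z y). Proof. by case: ultraP. Qed.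

Lemma ultra_le_add x y z : e x y <= e x z + e z y.
Proof.
apply: le_trans (ultra_le_max x y z) _.
by have := ultra_ge0 x z; have := ultra_ge0 z y; case: (leP (e x z) (e z y)); lra.
Qed.

Lemma ultra_ball_trans x y z r : e x y < r -> e y z < r -> e x z < r.
Proof. by move=> xy yz; apply: le_lt_trans (ultra_le_max x z y) _; rewrite gt_max xy. Qed.

Lemma ultra_ball_recenter x y z r : e x y < r -> (e y z < r <-> e x z < r).
Proof.
move=> xy; split; first exact: ultra_ball_trans.
by apply: ultra_ball_trans; rewrite ultra_sym.
Qed.

Lemma ultra_isosceles x y z : e x y < e x z -> e y z = e x z.
Proof.
move=> xy; apply/le_anti/andP; split.
  by apply: le_trans (ultra_le_max y z x) _; rewrite ge_max ultra_sym (ltW xy) lexx.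
by have := ultra_le_max x z y; rewrite le_max => /orP[|//]; rewrite leNgt xy.
Qed.

Lemma ultra_ball_open (op : set T -> Prop) x r :
  generates_topology op e -> op [set y | e x y < r].
Proof.
move=> ge; apply/ge => y /= xy; exists r; first exact: le_lt_trans (ultra_ge0 x y) xy.
by move=> z /=; apply: ultra_ball_trans.
Qed.

End OneUltrametric.

Lemma generates_topology_transfer (T : Type) (op : set T -> Prop) (e f : T -> T -> R) :
  generates_topology op e ->
  (forall x eps, 0 < eps -> exists2 eta, 0 < eta & forall y, e x y < eta -> f x y < eps) ->
  (forall x eta, 0 < eta -> exists2 eps, 0 < eps & forall y, f x y < eps -> e x y < eta) ->
  generates_topology op f.
Proof.
move=> ge ef fe U; rewrite ge; split => U_open x Ux.
- have [eta eta0 sub] := U_open x Ux; have [eps eps0 h] := fe x eta eta0.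
  by exists eps => // y /h; apply: sub.
- have [eps eps0 sub] := U_open x Ux; have [eta eta0 h] := ef x eps eps0.
  by exists eta => // y /h; apply: sub.
Qed.

Lemma generated_balls_refine (T : Type) (op : set T -> Prop) (e f : T -> T -> R) :
  ultrametric f -> generates_topology op e -> generates_topology op f ->
  forall x eps, 0 < eps -> exists2 eta, 0 < eta & forall y, e x y < eta -> f x y < eps.
Proof.
move=> uf ge gf x eps eps0.
have /ge /(_ x) [] := ultra_ball_open uf x eps gf; first by rewrite /= ultra_xx.
by move=> eta eta0 sub; exists eta => // y /sub.
Qed.

Section Subspace.
Variables (X : topologicalType) (A : set X) (w : X -> X -> R).
Hypothesis uw : ultrametric w.

Lemma ultrametric_restrict :
  ultrametric (fun a b : {x : X | A x} => w (proj1_sig a) (proj1_sig b)).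
Proof.
split=> [a b|a b|a b|a b c]; [exact: ultra_ge0 | | exact: ultra_sym | exact: ultra_le_max].
by rewrite ultra_eq0 //; split=> [/proj1_sig_inj|->].
Qed.

Lemma generates_subspace_topology : generates_topology open w ->
  generates_topology (subspace_open A) (fun a b => w (proj1_sig a) (proj1_sig b)).
Proof.
move=> gw U; split.
  move=> [V [/gw V_open ->]] a /= /V_open [r r0 sub].
  by exists r => // b /= ab; apply: sub.
move=> U_balls.
pose V := [set x | exists2 a, U a & exists2 r, 0 < r &
  [set b | w (proj1_sig a) (proj1_sig b) < r] `<=` U /\ w (proj1_sig a) x < r].
exists V; split.
  apply/gw => x [a Ua [r r0 [sub ax]]]; exists r => // y /= xy.
  by exists a => //; exists r => //; split => //; apply: ultra_ball_trans ax xy.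
apply/seteqP; split => a /=; last by move=> [b Ub [r r0 [sub /sub]]].
move=> Ua; exists a => //; have [r r0 sub] := U_balls a Ua.
by exists r => //; rewrite ultra_xx.
Qed.

End Subspace.
End Ultrametrics.
Section Rho.
Variables (R : realType) (S : set R).
Hypothesis hS : characteristic S.

Let S_ge0 : S `<=` [set r | 0 <= r]. Proof. by case: hS. Qed.

Definition S_below (c : R) : R := xget 0 [set t | [/\ S t, t != 0 & t <= c]].

Lemma S_belowP c : 0 < c -> [/\ S (S_below c), 0 < S_below c & S_below c <= c].
Proof.
move=> c0; case: hS => _ _ /(_ c c0) exS.
have [St t0 tc] := xgetPex 0 exS.
by split => //; rewrite lt0r t0 S_ge0.
Qed.

Fixpoint S_seq (n : nat) : R :=
  if n is n'.+1 then S_below (Num.min (S_seq n') (n.+1%:R)^-1) else S_below 1.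

Lemma S_seq_step n : 0 < S_seq n -> [/\ S (S_seq n.+1), 0 < S_seq n.+1 &
  S_seq n.+1 <= Num.min (S_seq n) (n.+2%:R)^-1].
Proof. by move=> sn0; apply: S_belowP; rewrite lt_min sn0 invr_gt0 ltr0Sn. Qed.

Lemma S_seqP n : [/\ S (S_seq n), 0 < S_seq n & S_seq n <= (n.+1%:R)^-1].
Proof.
elim: n => [|n [_ /S_seq_step[? ? le_min] _]]; first by rewrite invr1; apply: S_belowP.
by split => //; apply: le_trans le_min _; rewrite ge_min lexx orbT.
Qed.

Lemma S_seq_decr m n : (m <= n)%N -> S_seq n <= S_seq m.
Proof.
apply: (homo_leq (r := fun a b => b <= a)) => [x|y x z yx zy|i]; first exact: lexx.
  exact: le_trans zy yx.
have [_ /S_seq_step[_ _ le_min] _] := S_seqP i.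
by apply: le_trans le_min _; rewrite ge_min lexx.
Qed.

Definition rho (t : R) : R := if t <= 0 then 0 else S_seq (Num.truncn t^-1).

Lemma S_rho t : S (rho t).
Proof. by rewrite /rho; case: ifP => _; [case: hS | case: (S_seqP (Num.truncn t^-1))]. Qed.

Lemma rho0 : rho 0 = 0.
Proof. by rewrite /rho lexx. Qed.

Lemma rho_gt0 t : 0 < t -> 0 < rho t.
Proof. by move=> t0; rewrite /rho (leNgt t 0) t0 /=; case: (S_seqP (Num.truncn t^-1)). Qed.

Lemma rho_ge0 t : 0 <= rho t.
Proof. by rewrite /rho; case: ifP => // _; case: (S_seqP (Num.truncn t^-1)) => _ /ltW. Qed.

Lemma rho_le t : 0 <= t -> rho t <= t.
Proof.
rewrite le0r => /orP[/eqP ->|t0]; first by rewrite rho0.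
rewrite /rho (leNgt t 0) t0 /=; case: (S_seqP (Num.truncn t^-1)) => _ _ le_inv.
exact/ltW/(le_lt_trans le_inv (ltr_inv_truncn t0)).
Qed.

Lemma le_rho t t' : t <= t' -> rho t <= rho t'.
Proof.
move=> tt'; rewrite {1}/rho; case: ifPn => [_|]; first exact: rho_ge0.
rewrite -ltNge => t0; have t'0 := lt_le_trans t0 tt'.
rewrite /rho (leNgt t' 0) t'0 /=; apply/S_seq_decr/le_truncn.
by rewrite lef_pV2 ?posrE.
Qed.

Lemma lt_of_rho_lt t t' : rho t < rho t' -> t < t'.
Proof. by apply: contraTT; rewrite -!leNgt; apply: le_rho. Qed.

Lemma rho_max a b : rho (Num.max a b) = Num.max (rho a) (rho b).
Proof.
by case: (leP a b) => ab; [rewrite (max_idPr (le_rho ab)) | rewrite (max_idPl (le_rho (ltW ab)))].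
Qed.

Lemma rho_eq0 t : 0 <= t -> rho t = 0 -> t = 0.
Proof.
rewrite le0r => /orP[/eqP -> //|t0] rt0.
by have := rho_gt0 t0; rewrite rt0 ltxx.
Qed.

End Rho.

Section Extension.
Variables (R : realType) (S : set R) (X : topologicalType) (A : set X).
Hypothesis hS : characteristic S.
Variable w : X -> X -> R.
Hypothesis uw : ultrametric w.
Hypothesis gw : generates_topology open w.
Hypothesis cA : closed A.
Variable a0 : {x : X | A x}.

Definition distA x := inf [set w x a | a in A].

Lemma has_inf_distA x : has_inf [set w x a | a in A].
Proof.
split; first by exists (w x (proj1_sig a0)), (proj1_sig a0) => //; apply: proj2_sig.
by exists 0 => _ [a _ <-]; apply: ultra_ge0.
Qed.

Lemma distA_ge0 x : 0 <= distA x.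
Proof.
apply: lb_le_inf; first by case: (has_inf_distA x).
by move=> _ [a _ <-]; apply: ultra_ge0.
Qed.

Lemma distA_le x a : A a -> distA x <= w x a.
Proof. by move=> Aa; apply: (ge_inf (has_inf_distA x).2); exists a. Qed.

Lemma distA_mem x : A x -> distA x = 0.
Proof.
move=> Ax; apply/le_anti; rewrite distA_ge0 andbT.
by have := distA_le x Ax; rewrite ultra_xx.
Qed.

Lemma distA_gt0 x : ~ A x -> 0 < distA x.
Proof.
move=> nAx; have [r r0 sub] := (gw _).1 (closed_openC cA) x nAx.
apply: lt_le_trans r0 _; apply: lb_le_inf; first by case: (has_inf_distA x).
by move=> _ [a Aa <-]; rewrite leNgt; apply/negP => /sub.
Qed.

Lemma mem_of_distA_eq0 x : distA x = 0 -> A x.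
Proof. by move=> dx0; apply: contrapT => /distA_gt0; rewrite dx0 ltxx. Qed.

Lemma notA_of_lt_distA x y : w x y < distA x -> ~ A y.
Proof. by move=> xy Ay; have := distA_le x Ay; rewrite leNgt xy. Qed.

Lemma distA_ball x y : w x y < distA x -> distA y = distA x.
Proof.
move=> xy; rewrite /distA; congr inf; apply/seteqP.
by split => _ [a Aa <-]; exists a => //; [apply/esym|];
  apply: (ultra_isosceles uw); apply: lt_le_trans xy (distA_le x Aa).
Qed.

Definition in_gap x y := ~ A x /\ w x y < distA x.

Lemma in_gap_sym x y : in_gap x y -> in_gap y x.
Proof.
move=> [nAx xy]; split; first exact: notA_of_lt_distA xy.
by rewrite ultra_sym // (distA_ball xy).
Qed.

Lemma in_gap_trans x y z : in_gap x z -> in_gap z y -> in_gap x y.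
Proof.
move=> [nAx xz] [_ zy]; split => //.
by rewrite (distA_ball xz) in zy; apply: ultra_ball_trans xz zy.
Qed.

Definition retr_spec x (b : {x : X | A x}) : Prop :=
  (A x /\ proj1_sig b = x) \/ (~ A x /\ w (proj1_sig b) x < 2 * distA x).

Definition retr x := epsilon (inhabits a0) (retr_spec x).

Lemma retrP x : retr_spec x (retr x).
Proof.
apply: epsilon_spec; have [Ax|nAx] := pselect (A x); first by exists (exist _ x Ax); left.
have [_ [a Aa <-] near_a] := inf_adherent (distA_gt0 nAx) (has_inf_distA x).
exists (exist _ a Aa); right; split => //=.
by rewrite ultra_sym //; have := distA_ge0 x; lra.
Qed.

Lemma retr_mem x : A x -> proj1_sig (retr x) = x.
Proof. by move=> Ax; case: (retrP x) => [[]|[]]. Qed.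

Lemma retr_val a : retr (proj1_sig a) = a.
Proof. by apply: proj1_sig_inj; rewrite retr_mem //; apply: proj2_sig. Qed.

Lemma retr_close x : w x (proj1_sig (retr x)) <= 2 * distA x.
Proof.
rewrite ultra_sym //; have [Ax|nAx] := pselect (A x).
  by rewrite retr_mem // ultra_xx // distA_mem // mulr0.
by case: (retrP x) => [[]|[_ /ltW]].
Qed.

(* retr_spec x and retr_spec y are the same predicate, so epsilon picks the same
   point: distA y = distA x, and w b x < 2 distA x iff w b y < 2 distA x. *)
Lemma retr_gap x y : in_gap x y -> retr y = retr x.
Proof.
move=> [nAx xy]; rewrite /retr; congr epsilon; apply: funext => b; apply: propext.
have nAy := notA_of_lt_distA xy; rewrite /retr_spec (distA_ball xy).
have xy2 : w x y < 2 * distA x by have := distA_ge0 x; lra.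
have yx2 : w y x < 2 * distA x by rewrite ultra_sym.
split=> -[[]|[_ b_near]] //; right; split => //; exact: ultra_ball_trans b_near _.
Qed.

Lemma le_retr x y : w x y <= w x (proj1_sig (retr y)) + 2 * distA y.
Proof.
apply: le_trans (ultra_le_add uw _ _ (proj1_sig (retr y))) _.
by rewrite lerD2l ultra_sym // retr_close.
Qed.

Lemma retr_le_mem a y : A a -> w a (proj1_sig (retr y)) <= 3 * w a y.
Proof.
move=> Aa; apply: le_trans (ultra_le_add uw _ _ y) _.
have := retr_close y; have := distA_le y Aa; rewrite (ultra_sym uw y a).
have := ultra_ge0 uw a y; lra.
Qed.

Definition gap_dist x y :=
  if pselect (in_gap x y) then rho S (w x y)
  else Num.max (rho S (distA x)) (rho S (distA y)).

Lemma gap_dist_in x y : in_gap x y -> gap_dist x y = rho S (w x y).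
Proof. by rewrite /gap_dist; case: pselect. Qed.

Lemma gap_dist_out x y : ~ in_gap x y ->
  gap_dist x y = Num.max (rho S (distA x)) (rho S (distA y)).
Proof. by rewrite /gap_dist; case: pselect. Qed.

Lemma gap_dist_ge0 x y : 0 <= gap_dist x y.
Proof. by rewrite /gap_dist; case: pselect => ?; rewrite ?le_max (rho_ge0 hS). Qed.

Lemma S_gap_dist x y : S (gap_dist x y).
Proof.
by rewrite /gap_dist; case: pselect => ?; [apply: (S_rho hS) | apply: S_max; apply: (S_rho hS)].
Qed.

Lemma gap_dist_mem x y : A x -> A y -> gap_dist x y = 0.
Proof. by move=> Ax Ay; rewrite gap_dist_out ?distA_mem ?rho0 ?maxxx // => -[]. Qed.

Lemma gap_dist_xx x : gap_dist x x = 0.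
Proof.
have [Ax|nAx] := pselect (A x); first exact: gap_dist_mem.
have gxx : in_gap x x by split => //; rewrite (ultra_xx uw); apply: distA_gt0.
by rewrite gap_dist_in // (ultra_xx uw) rho0.
Qed.

Lemma gap_dist_sym x y : gap_dist x y = gap_dist y x.
Proof.
have [gxy|ngxy] := pselect (in_gap x y).
  by rewrite gap_dist_in // gap_dist_in 1?(ultra_sym uw) //; apply: in_gap_sym.
by rewrite !gap_dist_out 1?maxC // => /in_gap_sym.
Qed.

Lemma rho_distA_le_gap_dist x y : ~ in_gap x y -> rho S (distA x) <= gap_dist x y.
Proof. by move=> ngxy; rewrite gap_dist_out // le_max lexx. Qed.

Lemma rho_distA_le_max x y z : ~ in_gap x y ->
  rho S (distA x) <= Num.max (gap_dist x z) (gap_dist z y).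
Proof.
move=> ngxy; have [gxz|ngxz] := pselect (in_gap x z); last first.
  by apply: le_trans (rho_distA_le_gap_dist ngxz) _; rewrite le_max lexx.
have ngzy : ~ in_gap z y by move/(in_gap_trans gxz).
rewrite -(distA_ball gxz.2); apply: le_trans (rho_distA_le_gap_dist ngzy) _.
by rewrite le_max lexx orbT.
Qed.

Lemma gap_dist_ultra x y z : gap_dist x y <= Num.max (gap_dist x z) (gap_dist z y).
Proof.
have [gxy|ngxy] := pselect (in_gap x y); last first.
  rewrite gap_dist_out // ge_max rho_distA_le_max //= maxC gap_dist_sym (gap_dist_sym x).
  by apply: rho_distA_le_max => /in_gap_sym.
rewrite gap_dist_in //; have [gxz|ngxz] := pselect (in_gap x z); last first.
  apply: le_trans (le_rho hS (ltW gxy.2)) _.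
  by apply: le_trans (rho_distA_le_gap_dist ngxz) _; rewrite le_max lexx.
have [gzy|ngzy] := pselect (in_gap z y); last first.
  apply: le_trans (le_rho hS (ltW gxy.2)) _; rewrite -(distA_ball gxz.2).
  by apply: le_trans (rho_distA_le_gap_dist ngzy) _; rewrite le_max lexx orbT.
by rewrite !gap_dist_in // -(rho_max hS); apply/le_rho/ultra_le_max.
Qed.

Definition Ups (d : {x : X | A x} -> {x : X | A x} -> R) x y :=
  Num.max (d (retr x) (retr y)) (gap_dist x y).

Lemma Ups_le d1 d2 : (forall a b, d1 a b <= d2 a b) ->
  forall x y, Ups d1 x y <= Ups d2 x y.
Proof. by move=> le12 x y; apply: le_max2. Qed.

Lemma Ups_max d e :
  Ups (fun a b => Num.max (d a b) (e a b)) = (fun x y => Num.max (Ups d x y) (Ups e x y)).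
Proof. by apply/funext => x; apply/funext => y; rewrite /Ups maxACA maxxx. Qed.

Lemma Ups_restrict d : (forall a b, 0 <= d a b) ->
  forall a b, Ups d (proj1_sig a) (proj1_sig b) = d a b.
Proof.
move=> d_ge0 a b; rewrite /Ups !retr_val gap_dist_mem ?max_l //; exact: proj2_sig.
Qed.

Lemma Ups_le_max d1 d2 eps : (forall a b, d1 a b <= Num.max (d2 a b) eps) ->
  forall x y, Ups d1 x y <= Num.max (Ups d2 x y) eps.
Proof. by move=> le12 x y; rewrite /Ups maxAC; apply: le_max2. Qed.

Lemma Ups_UD d1 d2 : Ult (subspace_open A) S d1 -> Ult (subspace_open A) S d2 ->
  UD S (Ups d1) (Ups d2) = UD S d1 d2.
Proof.
have S_ge0 : S `<=` [set r | 0 <= r] by case: hS.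
move=> [/(S_ultrametric_ultrametric S_ge0) u1 _] [/(S_ultrametric_ultrametric S_ge0) u2 _].
rewrite /UD; congr (ereal_inf (_ `|` _)); apply/seteqP.
split => _ [eps [Seps close] <-]; exists eps => //; split => //.
  move=> a b; have := close (proj1_sig a) (proj1_sig b).
  by rewrite !Ups_restrict //; apply: ultra_ge0.
by move=> x y; split; apply: Ups_le_max => a b; case: (close a b).
Qed.

Section UltExtension.
Variable d : {x : X | A x} -> {x : X | A x} -> R.
Hypothesis hd : Ult (subspace_open A) S d.

Let ud : ultrametric d.
Proof. by case: hd => Sd _; apply: S_ultrametric_ultrametric Sd; case: hS. Qed.

Lemma d_small_of_w_small a eps : 0 < eps -> exists2 eta, 0 < eta &
  forall b, w (proj1_sig a) (proj1_sig b) < eta -> d a b < eps.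
Proof. exact: generated_balls_refine ud (generates_subspace_topology uw gw) hd.2 a eps. Qed.

Lemma w_small_of_d_small a eta : 0 < eta -> exists2 eps, 0 < eps &
  forall b, d a b < eps -> w (proj1_sig a) (proj1_sig b) < eta.
Proof.
exact: generated_balls_refine (ultrametric_restrict A uw) hd.2
  (generates_subspace_topology uw gw) a eta.
Qed.

Lemma Ups_small_of_w_small x eps : 0 < eps ->
  exists2 eta, 0 < eta & forall y, w x y < eta -> Ups d x y < eps.
Proof.
move=> eps0; have [Ax|nAx] := pselect (A x); last first.
  exists (Num.min (distA x) eps) => [|y]; first by rewrite lt_min eps0 distA_gt0.
  rewrite lt_min => /andP[xy xy_eps]; have gxy : in_gap x y by [].
  rewrite /Ups (retr_gap gxy) (ultra_xx ud) gap_dist_in // gt_max eps0 /=.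
  exact: le_lt_trans (rho_le hS (ultra_ge0 uw x y)) xy_eps.
have [eta eta0 d_small] := d_small_of_w_small (retr x) eps0.
exists (Num.min (eta / 3) eps) => [|y]; first by rewrite lt_min eps0; lra.
rewrite lt_min => /andP[xy xy_eps]; rewrite /Ups gt_max; apply/andP; split.
  apply: d_small; rewrite retr_mem //.
  by apply: le_lt_trans (retr_le_mem y Ax) _; lra.
rewrite gap_dist_out => [|[]//]; rewrite distA_mem // rho0 gt_max eps0 /=.
apply: le_lt_trans (rho_le hS (distA_ge0 y)) _.
by apply: le_lt_trans (distA_le y Ax) _; rewrite (ultra_sym uw).
Qed.

Lemma w_small_of_Ups_small x eta : 0 < eta ->
  exists2 eps, 0 < eps & forall y, Ups d x y < eps -> w x y < eta.
Proof.
move=> eta0; have [Ax|nAx] := pselect (A x); last first.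
  exists (Num.min (rho S (distA x)) (rho S eta)) => [|y].
    by rewrite lt_min !(rho_gt0 hS) ?distA_gt0.
  rewrite lt_min /Ups !gt_max => /andP[/andP[_ lt_distA] /andP[_ lt_eta]].
  have gxy : in_gap x y.
    by apply: contrapT => /rho_distA_le_gap_dist; rewrite leNgt lt_distA.
  by rewrite gap_dist_in // in lt_eta; apply: (lt_of_rho_lt hS) lt_eta.
have eta2 : 0 < eta / 2 by lra.
have [eps eps0 w_small] := w_small_of_d_small (retr x) eta2.
exists (Num.min eps (rho S (eta / 4))) => [|y].
  by rewrite lt_min eps0 (rho_gt0 hS) // divr_gt0.
rewrite lt_min /Ups !gt_max => /andP[/andP[/w_small + _] /andP[_]].
rewrite retr_mem // gap_dist_out => [|[]//]; rewrite gt_max => x_ry /andP[_].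
move/(lt_of_rho_lt hS) => distAy; apply: le_lt_trans (le_retr x y) _; lra.
Qed.

Lemma Ups_sym x y : Ups d x y = Ups d y x.
Proof. by rewrite /Ups (ultra_sym ud) gap_dist_sym. Qed.

Lemma Ups_Ult : Ult open S (Ups d).
Proof.
split; last exact: generates_topology_transfer gw Ups_small_of_w_small w_small_of_Ups_small.
have [[Sd _ _ _] _] := hd.
split=> [x y|x y|x y|x y z].
- exact: S_max (Sd _ _) (S_gap_dist _ _).
- split=> [|->]; last by rewrite /Ups (ultra_xx ud) gap_dist_xx maxxx.
  case/(max_eq0 (ultra_ge0 ud _ _) (gap_dist_ge0 x y)) => /(ultra_eq0 ud) rxy.
  have [gxy|ngxy] := pselect (in_gap x y).
    by rewrite gap_dist_in // => /(rho_eq0 hS (ultra_ge0 uw x y)) /(ultra_eq0 uw).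
  rewrite gap_dist_out // => /(max_eq0 (rho_ge0 hS _) (rho_ge0 hS _)) [].
  move=> /(rho_eq0 hS (distA_ge0 x)) /mem_of_distA_eq0 Ax.
  move=> /(rho_eq0 hS (distA_ge0 y)) /mem_of_distA_eq0 Ay.
  by rewrite -(retr_mem Ax) -(retr_mem Ay) rxy.
- exact: Ups_sym.
- by rewrite /Ups maxACA; apply: le_max2; [apply: ultra_le_max | apply: gap_dist_ultra].
Qed.

Lemma cvg_Ups_of_cvg_w u p : cvg_wrt w u p -> cvg_wrt (Ups d) u p.
Proof.
move=> u_p eps eps0; have [eta eta0 Ups_small] := Ups_small_of_w_small p eps0.
have [N uN] := u_p eta eta0; exists N => n Nn.
by rewrite Ups_sym; apply: Ups_small; rewrite (ultra_sym uw); apply: uN.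
Qed.

Lemma cauchy_w_in_gap u N : cauchy_wrt (Ups d) u ->
  (forall n, (N <= n)%N -> in_gap (u N) (u n)) -> cauchy_wrt w u.
Proof.
move=> cau gapN eps eps0; have [M uM] := cau _ (rho_gt0 hS eps0).
exists (maxn N M) => m n; rewrite !geq_max => /andP[Nm Mm] /andP[Nn Mn].
have gmn := in_gap_trans (in_gap_sym (gapN m Nm)) (gapN n Nn).
have := uM m n Mm Mn; rewrite /Ups gt_max gap_dist_in // => /andP[_].
exact: (lt_of_rho_lt hS).
Qed.

Lemma distA_vanishes u : cauchy_wrt (Ups d) u ->
  ~ (exists N, forall n, (N <= n)%N -> in_gap (u N) (u n)) ->
  forall eta, 0 < eta -> exists N, forall n, (N <= n)%N -> distA (u n) < eta.
Proof.
move=> cau no_gap eta eta0; have [N uN] := cau _ (rho_gt0 hS eta0).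
exists N => n Nn; rewrite ltNge; apply/negP => eta_le.
have nAn : ~ A (u n) by move/distA_mem => dn0; move: eta_le; rewrite dn0 leNgt eta0.
apply: no_gap; exists n => m nm; apply: contrapT => ngap.
have := uN n m Nn (leq_trans Nn nm); rewrite /Ups gt_max => /andP[_].
by rewrite ltNge (le_trans (le_rho hS eta_le) (rho_distA_le_gap_dist ngap)).
Qed.

Lemma cvg_w_of_cvg_retr u a : cvg_wrt d (retr \o u) a ->
  (forall eta, 0 < eta -> exists N, forall n, (N <= n)%N -> distA (u n) < eta) ->
  cvg_wrt w u (proj1_sig a).
Proof.
move=> ru_a distA0 eps eps0.
have eps2 : 0 < eps / 2 by lra.
have [eta eta0 w_small] := w_small_of_d_small a eps2.
have [N1 uN1] := ru_a eta eta0.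
have [N2 uN2] := distA0 (eps / 4) (divr_gt0 eps0 (ltr0n _ 4)).
exists (maxn N1 N2) => n; rewrite geq_max => /andP[n1 n2].
have a_ru : w (proj1_sig a) (proj1_sig (retr (u n))) < eps / 2.
  by apply: w_small; rewrite (ultra_sym ud); apply: uN1.
rewrite (ultra_sym uw); apply: le_lt_trans (le_retr _ _) _.
by have := uN2 n n2; lra.
Qed.

Lemma Ups_complete : complete_metric w -> complete_metric d -> complete_metric (Ups d).
Proof.
move=> cw cd u cau; suff [p /cvg_Ups_of_cvg_w] : exists p, cvg_wrt w u p by exists p.
(* Either u eventually stays in one ball, where Ups d is rho \o w, or it
   approaches A and then follows its retraction. *)
have [[N gapN]|no_gap] := pselect (exists N, forall n, (N <= n)%N -> in_gap (u N) (u n)).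
  exact/cw/(cauchy_w_in_gap cau gapN).
have [a ru_a] : exists a, cvg_wrt d (retr \o u) a.
  apply: cd => eps eps0; have [N uN] := cau eps eps0; exists N => m n Nm Nn.
  by apply: le_lt_trans (uN m n Nm Nn); rewrite le_max lexx.
by exists (proj1_sig a); apply: cvg_w_of_cvg_retr ru_a (distA_vanishes cau no_gap).
Qed.

End UltExtension.
End Extension.

Section CompleteUltrametric.
Variables (R : realType) (X : topologicalType) (w m : X -> X -> R).
Hypothesis uw : ultrametric w.
Hypothesis gw : generates_topology open w.
Hypothesis mm : is_metric m.
Hypothesis gm : generates_topology open m.
Hypothesis cm : complete_metric m.

Definition rad (k : nat) : R := (k.+1%:R)^-1.

Lemma rad_gt0 k : 0 < rad k.
Proof. by rewrite /rad invr_gt0 ltr0Sn. Qed.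

Lemma le_rad k k' : (k <= k')%N -> rad k' <= rad k.
Proof. by move=> kk'; rewrite /rad lef_pV2 ?posrE ?ltr0Sn // ler_nat. Qed.

Let m_xx x : m x x = 0. Proof. by have [_ meq _ _] := mm; apply/meq. Qed.
Let m_sym x y : m x y = m y x. Proof. by have [_ _ msym _] := mm. Qed.
Let m_triangle x y z : m x y <= m x z + m z y. Proof. by have [_ _ _ mt] := mm. Qed.

Lemma m_ball_open x r : open [set y | m x y < r].
Proof.
apply/gm => y /= xy; exists (r - m x y) => [|z /= yz]; first by rewrite subr_gt0.
by have := m_triangle x z y; lra.
Qed.

Definition level_ok n x k :=
  exists z, [set y | w x y < rad k] `<=` [set y | m z y < rad n].

Lemma level_exists n x : exists k, level_ok n x k.
Proof.
have x_in : [set y | m x y < rad n] x by rewrite /= m_xx rad_gt0.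
have [r r0 sub] := (gw _).1 (m_ball_open x (rad n)) x x_in.
exists (Num.truncn r^-1), x => y /= xy; apply: sub.
exact: lt_trans xy (ltr_inv_truncn r0).
Qed.

Definition level n x : nat :=
  xget 0%N [set k | level_ok n x k /\ forall k', level_ok n x k' -> (k <= k')%N].

Lemma levelP n x : level_ok n x (level n x) /\
  forall k, level_ok n x k -> (level n x <= k)%N.
Proof.
pose P k := level_ok n x k /\ forall k', level_ok n x k' -> (k <= k')%N.
suff : P (xget 0%N P) by [].
have ex_ok : exists k, `[< level_ok n x k >].
  by have [k ok_k] := level_exists n x; exists k; apply/asboolP.
have [k /asboolP ok_k min_k] := ex_minnP ex_ok.
by apply: xgetPex; exists k; split => // k' ok_k'; apply/min_k/asboolP.
Qed.

Definition cell n x := [set y | w x y < rad (level n x)].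

Lemma cell_eq n x y : cell n x y -> cell n y = cell n x.
Proof.
rewrite /cell /= => xy.
have yx : (level n y <= level n x)%N.
  apply: (levelP _ _).2; have [[z sub] _] := levelP n x; exists z => t /= yt; apply: sub.
  exact: (ultra_ball_recenter uw t xy).1 yt.
have xy' : (level n x <= level n y)%N.
  apply: (levelP _ _).2; have [[z sub] _] := levelP n y; exists z => t /= xt; apply: sub.
  apply: (ultra_ball_trans uw (y := x) _ xt).
  by rewrite (ultra_sym uw); apply: lt_le_trans xy (le_rad yx).
have -> : level n y = level n x by apply/eqP; rewrite eqn_leq yx xy'.
by apply/seteqP; split => t /=; [apply: (ultra_ball_recenter uw t xy).1|
  apply: (ultra_ball_recenter uw t xy).2].
Qed.

Lemma m_lt_of_cell_eq n x y : cell n x = cell n y -> m x y < 2 * rad n.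
Proof.
move=> cxy; have [[z sub] _] := levelP n x.
have zx : m z x < rad n by apply: sub; rewrite /= (ultra_xx uw) rad_gt0.
have zy : m z y < rad n.
  apply: sub; have : cell n y y by rewrite /cell /= (ultra_xx uw) rad_gt0.
  by rewrite -cxy.
by have := m_triangle x y z; rewrite m_sym in zx; lra.
Qed.

(* rad n for the least level n that separates x and y, 0 if there is none. *)
Definition cell_dist x y :=
  sup ([set 0] `|` [set rad n | n in [set n | cell n x <> cell n y]]).

Lemma has_sup_cell_dist x y :
  has_sup ([set 0] `|` [set rad n | n in [set n | cell n x <> cell n y]]).
Proof.
split; first by exists 0; left.
exists 1 => _ [->|[n _ <-]]; first exact: ler01.
by apply: le_trans (le_rad (leq0n n)) _; rewrite /rad invr1.
Qed.

Lemma cell_dist_ge0 x y : 0 <= cell_dist x y.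
Proof. by apply: (sup_upper_bound (has_sup_cell_dist x y)); left. Qed.

Lemma rad_le_cell_dist x y n : cell n x <> cell n y -> rad n <= cell_dist x y.
Proof. by move=> sep; apply: (sup_upper_bound (has_sup_cell_dist x y)); right; exists n. Qed.

Lemma cell_dist_le x y c : 0 <= c ->
  (forall n, cell n x <> cell n y -> rad n <= c) -> cell_dist x y <= c.
Proof.
move=> c0 le_c; apply: ge_sup; first by exists 0; left.
by move=> _ [->|[n sep <-]] //; apply: le_c.
Qed.

Lemma cell_dist_xx x : cell_dist x x = 0.
Proof. by apply/le_anti; rewrite cell_dist_ge0 andbT; apply: cell_dist_le => // n []. Qed.

Lemma cell_dist_sym x y : cell_dist x y = cell_dist y x.
Proof.
apply/le_anti/andP; split; apply: cell_dist_le; rewrite ?cell_dist_ge0 // => n sep;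
  by apply: rad_le_cell_dist => /esym.
Qed.

Lemma cell_dist_ultra x y z : cell_dist x y <= Num.max (cell_dist x z) (cell_dist z y).
Proof.
apply: cell_dist_le => [|n sep]; first by rewrite le_max cell_dist_ge0.
have [cxz|/rad_le_cell_dist sep_xz] := pselect (cell n x = cell n z).
  have /rad_le_cell_dist sep_zy : cell n z <> cell n y by rewrite -cxz.
  by apply: le_trans sep_zy _; rewrite le_max lexx orbT.
by apply: le_trans sep_xz _; rewrite le_max lexx.
Qed.

Lemma cell_dist_le_rad x y K : (forall n, (n <= K)%N -> cell n x = cell n y) ->
  cell_dist x y <= rad K.+1.
Proof.
move=> same; apply: cell_dist_le => [|n sep]; first exact/ltW/rad_gt0.
by case: (leqP n K) => [/same //|]; apply: le_rad.
Qed.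

Lemma cell_eq_of_cell_dist_lt x y n : cell_dist x y < rad n -> cell n x = cell n y.
Proof. by move=> lt_rad; apply: contrapT => /rad_le_cell_dist; rewrite leNgt lt_rad. Qed.

Definition refined_ultra x y := Num.max (w x y) (cell_dist x y).

Lemma ultrametric_refined_ultra : ultrametric refined_ultra.
Proof.
split=> [x y|x y|x y|x y z]; rewrite /refined_ultra.
- by rewrite /= le_max ultra_ge0.
- split=> [|->]; last by rewrite (ultra_xx uw) cell_dist_xx maxxx.
  by case/(max_eq0 (ultra_ge0 uw x y) (cell_dist_ge0 x y)) => /(ultra_eq0 uw).
- by rewrite (ultra_sym uw) cell_dist_sym.
- by rewrite maxACA; apply: le_max2; [apply: ultra_le_max | apply: cell_dist_ultra].
Qed.

Lemma w_small_same_cells K x : exists2 eta, 0 < eta &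
  forall y, w x y < eta -> forall n, (n <= K)%N -> cell n x = cell n y.
Proof.
elim: K => [|K [eta eta0 same]].
  exists (rad (level 0 x)) => [|y xy n]; first exact: rad_gt0.
  by rewrite leqn0 => /eqP ->; apply/esym/cell_eq.
exists (Num.min eta (rad (level K.+1 x))) => [|y]; first by rewrite lt_min eta0 rad_gt0.
rewrite lt_min => /andP[xy xy'] n; rewrite leq_eqVlt => /orP[/eqP ->|/same]; last exact.
exact/esym/cell_eq.
Qed.

Lemma generates_refined_ultra : generates_topology open refined_ultra.
Proof.
apply: (generates_topology_transfer gw) => x eps eps0; last first.
  by exists eps => // y; rewrite /refined_ultra gt_max => /andP[].
have [eta eta0 same] := w_small_same_cells (Num.truncn eps^-1) x.
exists (Num.min eta eps) => [|y]; first by rewrite lt_min eta0.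
rewrite lt_min => /andP[xy xy_eps]; rewrite /refined_ultra gt_max xy_eps /=.
apply: le_lt_trans (cell_dist_le_rad (same y xy)) _.
exact: le_lt_trans (le_rad (leqnSn _)) (ltr_inv_truncn eps0).
Qed.

Lemma complete_refined_ultra : complete_metric refined_ultra.
Proof.
move=> u cau; have [p u_p] : exists p, cvg_wrt m u p.
  apply: cm => eps eps0; have eps2 : 0 < eps / 2 by lra.
  have [N uN] := cau _ (rad_gt0 (Num.truncn (eps / 2)^-1)); exists N => i j Ni Nj.
  have := uN i j Ni Nj; rewrite /refined_ultra gt_max => /andP[_ /cell_eq_of_cell_dist_lt].
  move/m_lt_of_cell_eq => m_ij.
  have : rad (Num.truncn (eps / 2)^-1) < eps / 2 := ltr_inv_truncn eps2.
  lra.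
exists p => eps eps0.
have [eta eta0 small] :=
  generated_balls_refine ultrametric_refined_ultra gm generates_refined_ultra p eps0.
have [N uN] := u_p eta eta0; exists N => n Nn.
by rewrite (ultra_sym ultrametric_refined_ultra); apply: small; rewrite m_sym; apply: uN.
Qed.

End CompleteUltrametric.

Lemma complete_ultrametric_exists (R : realType) (X : topologicalType) (w : X -> X -> R) :
  ultrametric w -> generates_topology open w -> completely_metrizable R X ->
  exists u : X -> X -> R, [/\ ultrametric u, generates_topology open u & complete_metric u].
Proof.
move=> uw gw [m [mm gm cm]].
exists (refined_ultra w m).
by split; [apply: ultrametric_refined_ultra | apply: generates_refined_ultra |
  apply: complete_refined_ultra].
Qed.

Section EmptySubspace.
Variables (R : realType) (S : set R) (X : topologicalType) (w : X -> X -> R).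
Hypothesis hS : characteristic S.
Hypothesis uw : ultrametric w.

Lemma Ult_rho_comp : generates_topology open w -> Ult open S (fun x y => rho S (w x y)).
Proof.
move=> gw; split.
  split=> [x y|x y|x y|x y z]; first exact: S_rho.
  - split=> [/(rho_eq0 hS (ultra_ge0 uw x y))/(ultra_eq0 uw) //|->].
    by rewrite (ultra_xx uw) rho0.
  - by rewrite (ultra_sym uw).
  - by rewrite -(rho_max hS); apply/(le_rho hS)/ultra_le_max.
apply: (generates_topology_transfer gw) => x eps eps0.
  by exists eps => // y; apply: le_lt_trans (rho_le hS (ultra_ge0 uw x y)).
by exists (rho S eps); [apply: rho_gt0 | move=> y; apply: lt_of_rho_lt].
Qed.

Lemma complete_rho_comp : complete_metric w -> complete_metric (fun x y => rho S (w x y)).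
Proof.
move=> cw u cau; have [p u_p] : exists p, cvg_wrt w u p.
  apply: cw => eps eps0; have [N uN] := cau _ (rho_gt0 hS eps0).
  by exists N => i j Ni Nj; apply: (lt_of_rho_lt hS); apply: uN.
exists p => eps eps0; have [N uN] := u_p eps eps0; exists N => n Nn.
exact: le_lt_trans (rho_le hS (ultra_ge0 uw _ _)) (uN n Nn).
Qed.

End EmptySubspace.

Lemma UD_self (R : realType) (S : set R) (T : Type) (e : T -> T -> R) :
  characteristic S -> UD S e e = 0%E.
Proof.
case=> S_ge0 S0 _; apply/le_anti/andP; split.
  apply: ereal_inf_lbound; left; exists 0 => //; split => // x y.
  by rewrite le_max lexx.
apply: le_ereal_inf_tmp => _ [[eps [Seps _] <-]|->]; last exact: leey.
by rewrite lee_fin; apply: S_ge0.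
Qed.

Definition extension_operator (R : realType) (S : set R) (X : topologicalType) (A : set X)
    (Ups : ({x : X | A x} -> {x : X | A x} -> R) -> (X -> X -> R)) : Prop :=
  [/\ forall d, Ult (subspace_open A) S d -> Ult (@open X) S (Ups d),
      forall d1 d2, Ult (subspace_open A) S d1 -> Ult (subspace_open A) S d2 ->
        UD S (Ups d1) (Ups d2) = UD S d1 d2,
      forall d, Ult (subspace_open A) S d ->
        forall a b : {x : X | A x}, Ups d (proj1_sig a) (proj1_sig b) = d a b,
      forall d1 d2, Ult (subspace_open A) S d1 -> Ult (subspace_open A) S d2 ->
        (forall a b, d1 a b <= d2 a b) -> forall x y, Ups d1 x y <= Ups d2 x y &
      forall d e, Ult (subspace_open A) S d -> Ult (subspace_open A) S e ->
        Ups (fun a b => Num.max (d a b) (e a b)) =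
        (fun x y => Num.max (Ups d x y) (Ups e x y))].

Lemma extension_operator_exists (R : realType) (S : set R) (X : topologicalType)
    (A : set X) (w : X -> X -> R) :
  characteristic S -> ultrametric w -> generates_topology open w -> closed A ->
  exists Ups, extension_operator S Ups /\
    (complete_metric w -> forall d, Ult (subspace_open A) S d -> complete_metric d ->
       complete_metric (Ups d)).
Proof.
move=> hS uw gw cA; have [[a0 _]|noA] := pselect (exists a : {x : X | A x}, True).
  exists (Ups S w a0); split; first split.
  - by move=> d; apply: Ups_Ult.
  - exact: Ups_UD.
  - move=> d [Sd _]; have S_ge0 : S `<=` [set r | 0 <= r] by case: hS.
    have ud := S_ultrametric_ultrametric S_ge0 Sd.
    by apply: Ups_restrict => // a b; apply: (@ultra_ge0 _ _ d ud a b).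
  - by move=> d1 d2 _ _; apply: Ups_le.
  - by move=> d e _ _; apply: Ups_max.
  - by move=> cw d hd; apply: Ups_complete.
have all_eq (d1 d2 : {x : X | A x} -> {x : X | A x} -> R) : d1 = d2.
  by apply/funext => a; case: noA; exists a.
exists (fun _ x y => rho S (w x y)); split; first split.
- by move=> d _; apply: Ult_rho_comp.
- by move=> d1 d2 _ _; rewrite (all_eq d1 d2) !UD_self.
- by move=> d _ a; case: noA; exists a.
- by [].
- by move=> d e _ _; apply/funext => x; apply/funext => y; rewrite maxxx.
- by move=> cw d _ _; apply: complete_rho_comp.
Qed.

Theorem theorem1p11 (R : realType) (S : set R) (X : topologicalType) (A : set X) :
  characteristic S ->
  Ult (@open X) [set r : R | 0 <= r] !=set0 ->
  closed A ->
  (exists Ups : ({x : X | A x} -> {x : X | A x} -> R) -> (X -> X -> R),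
    [/\ forall d, Ult (subspace_open A) S d -> Ult (@open X) S (Ups d),
        (* (B1) *)
        forall d1 d2, Ult (subspace_open A) S d1 -> Ult (subspace_open A) S d2 ->
          UD S (Ups d1) (Ups d2) = UD S d1 d2,
        (* (B2) *)
        forall d, Ult (subspace_open A) S d ->
          forall a b : {x : X | A x}, Ups d (proj1_sig a) (proj1_sig b) = d a b,
        (* (B3) *)
        forall d1 d2, Ult (subspace_open A) S d1 -> Ult (subspace_open A) S d2 ->
          (forall a b, d1 a b <= d2 a b) -> forall x y, Ups d1 x y <= Ups d2 x y &
        (* (B4) *)
        forall d e, Ult (subspace_open A) S d -> Ult (subspace_open A) S e ->
          Ups (fun a b => Num.max (d a b) (e a b)) =
          (fun x y => Num.max (Ups d x y) (Ups e x y))])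
  /\
  (completely_metrizable R X ->
   exists Ups : ({x : X | A x} -> {x : X | A x} -> R) -> (X -> X -> R),
    [/\ forall d, Ult (subspace_open A) S d -> Ult (@open X) S (Ups d),
        (* (B1) *)
        forall d1 d2, Ult (subspace_open A) S d1 -> Ult (subspace_open A) S d2 ->
          UD S (Ups d1) (Ups d2) = UD S d1 d2,
        (* (B2) *)
        forall d, Ult (subspace_open A) S d ->
          forall a b : {x : X | A x}, Ups d (proj1_sig a) (proj1_sig b) = d a b,
        (* (B3) *)
        forall d1 d2, Ult (subspace_open A) S d1 -> Ult (subspace_open A) S d2 ->
          (forall a b, d1 a b <= d2 a b) -> forall x y, Ups d1 x y <= Ups d2 x y &
        (* (B4) *)
        forall d e, Ult (subspace_open A) S d -> Ult (subspace_open A) S e ->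
          Ups (fun a b => Num.max (d a b) (e a b)) =
          (fun x y => Num.max (Ups d x y) (Ups e x y))]
    /\
        (* (B5) *)
        forall d, Ult (subspace_open A) S d -> complete_metric d ->
          complete_metric (Ups d)).
Proof.
move=> hS [w [Sw gw]] cA; have uw : ultrametric w := Sw.
have [Ups [Ups_ext _]] := extension_operator_exists hS uw gw cA.
split; first by exists Ups.
move=> /(complete_ultrametric_exists uw gw) [wc [uwc gwc cwc]].
have [Ups' [Ups'_ext Ups'_complete]] := extension_operator_exists hS uwc gwc cA.
by exists Ups'; split => //; apply: Ups'_complete.
Qed.
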